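(* Let $\mathbb{F}$ be a field of characteristic zero, let $\mathcal{A}=M_4(\mathbb{F})$ with the transpose involution, and let $\mathcal{L}$ be a Lie skew-ideal of $\mathcal{A}$. If $\mathcal{L}$ is closed under conjugation by elements of $O(4)=\{P\in M_4(\mathbb{F}): PP^t=I\}$, then $\mathcal{L}$ is one of \[ 0,\ \mathcal{Z},\ \mathcal{K},\ [\mathcal{S},\mathcal{K}],\ \mathcal{S},\ \mathcal{Z}+\mathcal{K},\ [\mathcal{A},\mathcal{A}],\ \mathcal{A}. \]
   Context: A Lie skew-ideal of an algebra with involution $\mathcal{A}$ is a subspace $\mathcal{L}$ such that $[x,a]=xa-ax\in\mathcal{L}$ for all $x\in\mathcal{L}$ and all skew-symmetric $a\in\mathcal{A}$. $\mathcal{S}$, $\mathcal{K}$, $\mathcal{Z}$ denote the symmetric, skew-symmetric (w.r.t. transpose) and scalar matrices in $M_4(\mathbb{F})$; for subsets $U,V$, $[U,V]$ is the linear span of $\{uv-vu:u\in U,v\in V\}$. *)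

From HB Require Import structures.
From mathcomp Require Import all_boot all_order all_algebra.
Set Implicit Arguments. Unset Strict Implicit. Unset Printing Implicit Defensive.
Import GRing.Theory.
Local Open Scope ring_scope.

Section Defs.
Variable F : fieldType.
Notation M4 := 'M[F]_4.

Definition lieb (x y : M4) : M4 := x *m y - y *m x.

Definition symmxP (x : M4) : Prop := x^T = x.
Definition skewmxP (x : M4) : Prop := x^T = - x.
Definition scalarmxP (x : M4) : Prop := exists c : F, x = c%:M.
Definition allmxP (x : M4) : Prop := True.

Definition comm_span (U V : M4 -> Prop) (x : M4) : Prop :=
  exists (n : nat) (c : 'I_n -> F) (u v : 'I_n -> M4),
    (forall i, U (u i)) /\ (forall i, V (v i)) /\
    x = \sum_(i < n) c i *: lieb (u i) (v i).

Definition scal_plus_skewP (x : M4) : Prop :=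
  exists z k, scalarmxP z /\ skewmxP k /\ x = z + k.

Definition lie_skew_ideal (L : {vspace M4}) : Prop :=
  forall x a : M4, x \in L -> skewmxP a -> lieb x a \in L.

Definition orthogonalP (P : M4) : Prop := P *m P^T = 1%:M.

Definition O4_conj_closed (L : {vspace M4}) : Prop :=
  forall P x : M4, orthogonalP P -> x \in L -> P *m x *m invmx P \in L.

Definition vs_is (L : {vspace M4}) (Q : M4 -> Prop) : Prop :=
  forall x : M4, x \in L <-> Q x.
End Defs.

From Pilot Require Import Defs.
From HB Require Import structures.
From mathcomp Require Import all_boot all_order all_algebra all_fingroup.
From Stdlib Require Import Classical.
From mathcomp Require Import ring.
Import GRing.Theory.
Local Open Scope ring_scope.
Set Implicit Arguments. Unset Strict Implicit. Unset Printing Implicit Defensive.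

(** In characteristic zero M_4 = Z ⊕ K ⊕ S_0, with S_0 the traceless symmetric
   matrices. Conjugating an element of L by the diagonal sign matrices and the
   permutation matrices of O(4) and taking linear combinations isolates its
   diagonal or a single pair of opposite entries; a bracket with a skew matrix
   then turns a diagonal matrix with distinct entries into E_pq + E_qp. Hence as
   soon as some element of L has a nonzero Z-, K- or S_0-component, L contains
   all of Z, K or S_0 respectively. Every element of L splitting into its three
   components, L is the sum of the components it meets, and the 2^3 choices give
   the eight subspaces of the list. *)

Notation i0 := (@Ordinal 4 0 isT).
Notation i1 := (@Ordinal 4 1 isT).
Notation i2 := (@Ordinal 4 2 isT).
Notation i3 := (@Ordinal 4 3 isT).

Lemma ord4P (a : 'I_4) : [\/ a = i0, a = i1, a = i2 | a = i3].
Proof.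
case: a => [[|[|[|[|//]]]] lt_a4].
- by apply: Or41; apply/val_inj.
- by apply: Or42; apply/val_inj.
- by apply: Or43; apply/val_inj.
- by apply: Or44; apply/val_inj.
Qed.

Ltac ord4 a := case: (ord4P a) => ->.

Lemma perm_pair (T : finType) (p q i j : T) : p != q -> i != j ->
  exists s : {perm T}, s p = i /\ s q = j.
Proof.
move=> neq_pq neq_ij; pose q' := tperm p i q.
have neq_q'i : q' != i by rewrite /q' -{2}(tpermL p i) (inj_eq perm_inj) eq_sym.
exists (tperm p i * tperm q' j)%g; rewrite !permM tpermL.
by split; [rewrite tpermD // eq_sym | rewrite tpermL].
Qed.

Lemma sub_mxE (R : zmodType) m n (A B : 'M[R]_(m, n)) i j : (A - B) i j = A i j - B i j.
Proof. by rewrite !mxE. Qed.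

Section MatrixUnits.
Variable F : fieldType.
Notation M4 := 'M[F]_4.

Lemma mxtrace4 (x : M4) : \tr x = x i0 i0 + x i1 i1 + x i2 i2 + x i3 i3.
Proof.
rewrite /mxtrace !big_ord_recl big_ord0 addr0 !addrA.
by repeat f_equal; apply/val_inj.
Qed.

Lemma mulmx4 (x y : M4) a b :
  (x *m y) a b = x a i0 * y i0 b + x a i1 * y i1 b + x a i2 * y i2 b + x a i3 * y i3 b.
Proof.
rewrite !mxE !big_ord_recl big_ord0 addr0 !addrA.
by repeat f_equal; apply/val_inj.
Qed.

Lemma orthogonal_invmx (P : M4) : Defs.orthogonalP P -> invmx P = P^T.
Proof.
move=> PPt; have [P_unit _] := mulmx1_unit PPt.
by rewrite -[invmx P]mulmx1 -PPt mulmxA mulVmx // mul1mx.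
Qed.

Definition pairmx (e : F) (p q : 'I_4) : M4 := delta_mx p q + e *: delta_mx q p.

Lemma pairmx_sym p q : symmxP (pairmx 1 p q).
Proof.
rewrite /symmxP /pairmx scale1r linearD /= !trmx_delta.
exact: addrC.
Qed.

Lemma pairmx_skew p q : skewmxP (pairmx (-1) p q).
Proof.
rewrite /skewmxP /pairmx linearD linearZ /= !trmx_delta.
by rewrite !scaleN1r opprD opprK addrC.
Qed.

Lemma lieb_delta_pairmx e p q :
  p != q -> lieb (delta_mx p p) (pairmx e p q) = pairmx (- e) p q.
Proof.
move=> neq_pq; rewrite /lieb /pairmx mulmxDl mulmxDr -!scalemxAl -!scalemxAr.
rewrite !mul_delta_mx_cond !eqxx (negbTE neq_pq) eq_sym (negbTE neq_pq).
by rewrite !mulr0n !mulr1n !scaler0 addr0 add0r scaleNr.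
Qed.

Lemma lieb_pairmx p : p != i0 ->
  lieb (pairmx 1 i0 p) (pairmx (-1) i0 p) = 2%:R *: (delta_mx p p - delta_mx i0 i0).
Proof.
move=> neq_p0; rewrite /lieb /pairmx !mulmxDl !mulmxDr -!scalemxAl -!scalemxAr.
rewrite !mul_delta_mx_cond !eqxx (negbTE neq_p0) eq_sym (negbTE neq_p0).
rewrite !mulr0n !mulr1n !scaler0 ?addr0 ?add0r !scale1r.
by apply/matrixP => a b; rewrite !mxE; ring.
Qed.

Definition lin_closed (P : M4 -> Prop) :=
  [/\ P 0, forall x y, P x -> P y -> P (x + y) & forall c x, P x -> P (c *: x)].

Lemma sym_traceless_span (P : M4 -> Prop) x : lin_closed P ->
  (forall p q, p != q -> P (pairmx 1 p q)) ->
  (forall p, P (delta_mx p p - delta_mx i0 i0)) ->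
  symmxP x -> \tr x = 0 -> P x.
Proof.
move=> [P0 PD PZ] Ppair Pdiag sym_x tr_x.
have xC a b : x b a = x a b by move/matrixP: sym_x => /(_ a b); rewrite mxE.
have x00 : x i0 i0 = - x i1 i1 - x i2 i2 - x i3 i3.
  by rewrite -[LHS]subr0 -tr_x mxtrace4; ring.
have -> : x = x i0 i1 *: pairmx 1 i0 i1 + x i0 i2 *: pairmx 1 i0 i2
   + x i0 i3 *: pairmx 1 i0 i3 + x i1 i2 *: pairmx 1 i1 i2
   + x i1 i3 *: pairmx 1 i1 i3 + x i2 i3 *: pairmx 1 i2 i3
   + x i1 i1 *: (delta_mx i1 i1 - delta_mx i0 i0)
   + x i2 i2 *: (delta_mx i2 i2 - delta_mx i0 i0)
   + x i3 i3 *: (delta_mx i3 i3 - delta_mx i0 i0).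
  apply/matrixP => a b; rewrite /pairmx !mxE.
  ord4 a; ord4 b; rewrite /= ?mulr1n ?mulr0n ?(xC i0 i1) ?(xC i0 i2) ?(xC i0 i3)
    ?(xC i1 i2) ?(xC i1 i3) ?(xC i2 i3) ?x00; ring.
by repeat ((apply: (Ppair); done) || (apply: (Pdiag); done) || apply: (PD) || apply: (PZ)).
Qed.

End MatrixUnits.

Section CommSpan.
Variable F : fieldType.
Notation M4 := 'M[F]_4.
Implicit Types U V : M4 -> Prop.

Lemma comm_span_lin_closed U V : lin_closed (comm_span U V).
Proof.
split.
- exists 0%N, (fun _ => 0), (fun _ => 0), (fun _ => 0).
  by split; [case | split; [case | rewrite big_ord0]].
- move=> x y [n1 [c1 [u1 [v1 [Uu1 [Vv1 ->]]]]]] [n2 [c2 [u2 [v2 [Uu2 [Vv2 ->]]]]]].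
  pose glue T (f1 : 'I_n1 -> T) (f2 : 'I_n2 -> T) i :=
    match split i with inl a => f1 a | inr b => f2 b end.
  exists (n1 + n2)%N, (glue _ c1 c2), (glue _ u1 u2), (glue _ v1 v2).
  split; first by move=> i; rewrite /glue; case: split.
  split; first by move=> i; rewrite /glue; case: split.
  rewrite big_split_ord /glue; congr (_ + _); apply: eq_bigr => i _.
    by rewrite (unsplitK (inl _ i)).
  by rewrite (unsplitK (inr _ i)).
- move=> c x [n [c1 [u [v [Uu [Vv ->]]]]]].
  exists n, (fun i => c * c1 i), u, v; split=> //; split=> //.
  by rewrite scaler_sumr; apply: eq_bigr => i _; rewrite scalerA.
Qed.

Lemma comm_span_lieb U V u v : U u -> V v -> comm_span U V (lieb u v).
Proof.
move=> Uu Vv; exists 1%N, (fun _ => 1), (fun _ => u), (fun _ => v).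
by split=> //; split=> //; rewrite big_ord1 scale1r.
Qed.

Lemma comm_span_sub U V U' V' x : (forall u, U u -> U' u) -> (forall v, V v -> V' v) ->
  comm_span U V x -> comm_span U' V' x.
Proof.
move=> sUU' sVV' [n [c [u [v [Uu [Vv ->]]]]]].
by exists n, c, u, v; split; [move=> i; apply: sUU' | split=> // i; apply: sVV'].
Qed.

Lemma comm_span_traceless U V x : comm_span U V x -> \tr x = 0.
Proof.
move=> [n [c [u [v [_ [_ ->]]]]]].
rewrite raddf_sum big1 // => i _.
by rewrite /= mxtraceZ /lieb raddfB /= mxtrace_mulC subrr mulr0.
Qed.

Lemma comm_span_sym_skew_sym x : comm_span (@symmxP F) (@skewmxP F) x -> symmxP x.
Proof.
move=> [n [c [u [v [Su [Kv ->]]]]]].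
rewrite /symmxP linear_sum; apply: eq_bigr => i _.
rewrite linearZ /= /lieb linearB /= !trmx_mul Su Kv mulNmx mulmxN opprK.
by rewrite addrC.
Qed.

End CommSpan.

Section CharZero.
Variable F : fieldType.
Hypothesis Fchar0 : [pchar F] =i pred0.
Notation M4 := 'M[F]_4.
Implicit Types x : M4.

Lemma natrS_neq0 n : n.+1%:R != 0 :> F.
Proof. by rewrite ((pcharf0P F).1 Fchar0 n.+1). Qed.

Let two_neq0 := natrS_neq0 1.
Let four_neq0 := natrS_neq0 3.

Lemma skewmx_entries x :
  skewmxP x -> (forall a b, x b a = - x a b) /\ (forall a, x a a = 0).
Proof.
move=> skew_x.
have xN a b : x b a = - x a b by move/matrixP: skew_x => /(_ a b); rewrite !mxE.
split=> // a; apply/eqP; rewrite -(mulrI_eq0 _ (lregP two_neq0)) mulr_natl mulr2n.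
by rewrite {1}xN addNr.
Qed.

Lemma skew_span (P : M4 -> Prop) x : lin_closed P ->
  (forall p q, p != q -> P (pairmx (-1) p q)) -> skewmxP x -> P x.
Proof.
move=> [P0 PD PZ] Ppair /skewmx_entries[xN x_diag].
have -> : x = x i0 i1 *: pairmx (-1) i0 i1 + x i0 i2 *: pairmx (-1) i0 i2
   + x i0 i3 *: pairmx (-1) i0 i3 + x i1 i2 *: pairmx (-1) i1 i2
   + x i1 i3 *: pairmx (-1) i1 i3 + x i2 i3 *: pairmx (-1) i2 i3.
  apply/matrixP => a b; rewrite /pairmx !mxE.
  ord4 a; ord4 b; rewrite /= ?mulr1n ?mulr0n ?(xN i0 i1) ?(xN i0 i2) ?(xN i0 i3)
    ?(xN i1 i2) ?(xN i1 i3) ?(xN i2 i3) ?x_diag; ring.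
by repeat ((apply: (Ppair); done) || apply: (PD) || apply: (PZ)).
Qed.

Definition scalar_part (x : M4) : M4 := (\tr x / 4%:R)%:M.
Definition skew_part (x : M4) : M4 := 2%:R^-1 *: (x - x^T).
Definition sym0_part (x : M4) : M4 := 2%:R^-1 *: (x + x^T) - scalar_part x.

Lemma mx_decomp x : x = scalar_part x + skew_part x + sym0_part x.
Proof.
apply/matrixP => a b; rewrite /scalar_part /skew_part /sym0_part !mxE.
by field; rewrite two_neq0 four_neq0.
Qed.

Lemma skew_part_skew x : skewmxP (skew_part x).
Proof. by apply/matrixP => a b; rewrite /skew_part !mxE; ring. Qed.

Lemma sym0_part_sym x : symmxP (sym0_part x).
Proof. by apply/matrixP => a b; rewrite /sym0_part /scalar_part !mxE eq_sym; ring. Qed.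

Lemma sym0_part_traceless x : \tr (sym0_part x) = 0.
Proof.
rewrite /sym0_part /scalar_part !mxtrace4 !mxE /= ?mulr1n.
by field; rewrite ?two_neq0 ?four_neq0.
Qed.

Lemma scalar_part_traceless x : \tr x = 0 -> scalar_part x = 0.
Proof. by rewrite /scalar_part => ->; rewrite mul0r raddf0. Qed.

Lemma skew_part_sym x : symmxP x -> skew_part x = 0.
Proof. by rewrite /symmxP /skew_part => ->; rewrite subrr scaler0. Qed.

Lemma sym0_part_eq0 x : (forall i j, i != j -> x i j + x j i = 0) ->
  (forall i j, x i i = x j j) -> sym0_part x = 0.
Proof.
move=> x_off x_diag.
have xN a b : a != b -> x b a = - x a b.
  by move=> neq_ab; apply/eqP; rewrite -addr_eq0 addrC x_off.
apply/matrixP => a b; rewrite /sym0_part /scalar_part mxtrace4 !mxE.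
by ord4 a; ord4 b; rewrite /= ?mulr1n ?mulr0n ?(xN i0 i1) ?(xN i0 i2) ?(xN i0 i3)
  ?(xN i1 i2) ?(xN i1 i3) ?(xN i2 i3) ?(x_diag i1 i0) ?(x_diag i2 i0)
  ?(x_diag i3 i0) //; field; rewrite ?two_neq0 ?four_neq0.
Qed.

Lemma scal_plus_skew_entries x : scal_plus_skewP x <->
  (forall i j, i != j -> x i j + x j i = 0) /\ (forall i j, x i i = x j j).
Proof.
split.
  move=> [_ [k [[c ->] [/skewmx_entries[kN k_diag] ->]]]].
  split=> i j; rewrite !mxE ?eqxx ?k_diag ?addr0 //.
  by move=> neq_ij; rewrite (negbTE neq_ij) eq_sym (negbTE neq_ij) kN addrACA addNr !add0r.
move=> [x_off x_diag]; exists (scalar_part x), (skew_part x).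
split; first by exists (\tr x / 4%:R).
split; first exact: skew_part_skew.
by rewrite {1}(mx_decomp x) sym0_part_eq0 // addr0.
Qed.

Lemma scal_plus_skew_sym0_part x : scal_plus_skewP x -> sym0_part x = 0.
Proof. by move/scal_plus_skew_entries=> [x_off x_diag]; exact: sym0_part_eq0. Qed.

Lemma mx_eq0_iff x : x = 0 <-> \tr x = 0 /\ symmxP x /\ scal_plus_skewP x.
Proof.
split=> [-> | [tr_x [sym_x /scal_plus_skew_sym0_part sym0_x]]].
  split; [exact: linear0 | split; [exact: trmx0 |]].
  by apply/scal_plus_skew_entries; split=> *; rewrite !mxE ?addr0.
by rewrite (mx_decomp x) scalar_part_traceless // skew_part_sym // sym0_x !addr0.
Qed.

Lemma scalarmx_iff x : scalarmxP x <-> symmxP x /\ scal_plus_skewP x.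
Proof.
split.
  move=> [c ->]; split; first exact: tr_scalar_mx.
  apply/scal_plus_skew_entries; split=> i j; rewrite !mxE ?eqxx // => neq_ij.
  by rewrite (negbTE neq_ij) eq_sym (negbTE neq_ij) !mulr0n addr0.
move=> [sym_x /scal_plus_skew_sym0_part sym0_x]; exists (\tr x / 4%:R).
by rewrite {1}(mx_decomp x) skew_part_sym // sym0_x !addr0.
Qed.

Lemma skewmx_iff x : skewmxP x <-> \tr x = 0 /\ scal_plus_skewP x.
Proof.
split.
  move=> skew_x; have [xN x_diag] := skewmx_entries skew_x.
  split; first by rewrite mxtrace4 !x_diag !addr0.
  by apply/scal_plus_skew_entries; split=> i j; [move=> _; rewrite xN addNr | rewrite !x_diag].
move=> [tr_x /scal_plus_skew_sym0_part sym0_x].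
rewrite (mx_decomp x) scalar_part_traceless // sym0_x add0r addr0.
exact: skew_part_skew.
Qed.

Lemma sym_skew_comm_iff x :
  comm_span (@symmxP F) (@skewmxP F) x <-> \tr x = 0 /\ symmxP x.
Proof.
split=> [cx | [tr_x sym_x]].
  by split; [exact: comm_span_traceless cx | exact: comm_span_sym_skew_sym].
have [C0 _ CZ] := comm_span_lin_closed (@symmxP F) (@skewmxP F).
apply: (sym_traceless_span (comm_span_lin_closed _ _)) sym_x tr_x => [p q neq_pq | p].
  rewrite -[1](opprK 1) -lieb_delta_pairmx //.
  by apply: comm_span_lieb; [rewrite /symmxP trmx_delta | exact: pairmx_skew].
have [-> | neq_p0] := eqVneq p i0; first by rewrite subrr; exact: C0.
rewrite -[_ - _](scalerK two_neq0) -lieb_pairmx //; apply: CZ.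
by apply: comm_span_lieb; [exact: pairmx_sym | exact: pairmx_skew].
Qed.

Lemma comm_span_all_iff x : comm_span (@allmxP F) (@allmxP F) x <-> \tr x = 0.
Proof.
split=> [|tr_x]; first exact: comm_span_traceless.
have [_ AD _] := comm_span_lin_closed (@allmxP F) (@allmxP F).
rewrite (mx_decomp x) scalar_part_traceless // add0r; apply: AD.
  apply: (skew_span (comm_span_lin_closed _ _)); last exact: skew_part_skew.
  by move=> p q neq_pq; rewrite -(lieb_delta_pairmx 1 neq_pq); apply: comm_span_lieb.
apply: (comm_span_sub (U := @symmxP F) (V := @skewmxP F)) => //.
by apply/sym_skew_comm_iff; split; [exact: sym0_part_traceless | exact: sym0_part_sym].
Qed.

End CharZero.

Section SkewIdeal.
Variable F : fieldType.
Hypothesis Fchar0 : [pchar F] =i pred0.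
Notation M4 := 'M[F]_4.
Implicit Types x y : M4.
Variable L : {vspace M4}.
Hypothesis L_ideal : lie_skew_ideal L.
Hypothesis L_O4 : O4_conj_closed L.

Let two_neq0 := natrS_neq0 Fchar0 1.

Lemma lin_closed_mem : lin_closed (fun x => x \in L).
Proof. by split; [exact: mem0v | exact: memvD | exact: memvZ]. Qed.

Lemma perm_conj_mem (s : {perm 'I_4}) x :
  x \in L -> \matrix_(a, b) x (s a) (s b) \in L.
Proof.
move=> xL.
have orth_s : Defs.orthogonalP (perm_mx s : M4).
  by rewrite /Defs.orthogonalP tr_perm_mx -perm_mxM mulgV perm_mx1.
have := L_O4 orth_s xL; rewrite orthogonal_invmx // tr_perm_mx -row_permE -col_permE.
by congr (_ \in L); apply/matrixP => a b; rewrite !mxE.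
Qed.

Definition sgn (k a : 'I_4) : F := if a == k then -1 else 1.

Definition sign_conj k x : M4 := \matrix_(a, b) (sgn k a * sgn k b * x a b).

Lemma sign_conj_mem k x : x \in L -> sign_conj k x \in L.
Proof.
move=> xL; pose D : M4 := diag_mx (\row_a sgn k a).
have orth_D : Defs.orthogonalP D.
  rewrite /Defs.orthogonalP tr_diag_mx mul_diag_mx; apply/matrixP => a b; rewrite !mxE.
  case: eqVneq => [->|_]; rewrite ?mulr0 // mulr1n /sgn.
  by case: ifP; rewrite ?mulrNN mulr1.
have := L_O4 orth_D xL; rewrite orthogonal_invmx // tr_diag_mx mul_diag_mx mul_mx_diag.
by congr (_ \in L); apply/matrixP => a b; rewrite !mxE; ring.
Qed.

Lemma pairmx_mem_move e (i j p q : 'I_4) :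
  i != j -> p != q -> pairmx e i j \in L -> pairmx e p q \in L.
Proof.
move=> neq_ij neq_pq eL; have [s [sp sq]] := perm_pair neq_pq neq_ij.
have := perm_conj_mem s eL; congr (_ \in L); apply/matrixP => a b.
by rewrite /pairmx !mxE -sp -sq !(inj_eq perm_inj).
Qed.

Lemma mem_move01 x (i j : 'I_4) : i != j -> x \in L -> exists2 y, y \in L &
  [/\ y i0 i1 = x i j, y i1 i0 = x j i, y i0 i0 = x i i & y i1 i1 = x j j].
Proof.
move=> neq_ij xL; have [s [si sj]] := @perm_pair _ i0 i1 i j isT neq_ij.
by exists (\matrix_(a, b) x (s a) (s b)); [exact: perm_conj_mem | rewrite !mxE si sj].
Qed.

Definition sign_diff k x : M4 := x - sign_conj k x.
Definition sign_avg k x : M4 := x + sign_conj k x.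

Lemma sign_diff_mem k x : x \in L -> sign_diff k x \in L.
Proof. by move=> xL; apply: memvB => //; exact: sign_conj_mem. Qed.

Lemma sign_avg_mem k x : x \in L -> sign_avg k x \in L.
Proof. by move=> xL; apply: memvD => //; exact: sign_conj_mem. Qed.

Definition entries01 x : M4 := sign_diff i1 (sign_diff i0 x).

Lemma entries01_mem x : x \in L -> entries01 x \in L.
Proof. by move=> xL; do 2! apply: sign_diff_mem. Qed.

Lemma entries01E x :
  entries01 x = (4%:R * x i0 i1) *: delta_mx i0 i1 + (4%:R * x i1 i0) *: delta_mx i1 i0.
Proof.
apply/matrixP => a b; rewrite /entries01 /sign_diff /sign_conj /sgn !mxE.
by ord4 a; ord4 b; rewrite /= ?mulr1n ?mulr0n; ring.
Qed.

Definition diag_extract x : M4 := sign_avg i3 (sign_avg i2 (sign_avg i1 (sign_avg i0 x))).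

Lemma diag_extract_mem x : x \in L -> diag_extract x \in L.
Proof. by move=> xL; do 4! apply: sign_avg_mem. Qed.

Lemma diag_extractE x : diag_extract x = 16%:R *: diag_mx (\row_a x a a).
Proof.
apply/matrixP => a b; rewrite /diag_extract /sign_avg /sign_conj /sgn !mxE.
by ord4 a; ord4 b; rewrite /= ?mulr1n ?mulr0n; ring.
Qed.

Lemma skew01_mem x : x \in L -> x i0 i1 != x i1 i0 -> pairmx (-1) i0 i1 \in L.
Proof.
move=> xL neq_x; set c := 4%:R * (x i0 i1 - x i1 i0).
have c_neq0 : c != 0 by rewrite mulf_neq0 ?natrS_neq0 // subr_eq0.
suff: c *: pairmx (-1) i0 i1 \in L by rewrite rpredZeq (negbTE c_neq0).
have yL := entries01_mem xL.
suff -> : c *: pairmx (-1) i0 i1 =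
    entries01 x - \matrix_(a, b) entries01 x (tperm i0 i1 a) (tperm i0 i1 b).
  by apply: memvB => //; exact: perm_conj_mem.
apply/matrixP => a b; rewrite /c entries01E /pairmx !mxE !permE.
by ord4 a; ord4 b; rewrite /= ?mulr1n ?mulr0n; ring.
Qed.

Lemma sym01_mem_offdiag x : x \in L -> x i0 i1 + x i1 i0 != 0 -> pairmx 1 i0 i1 \in L.
Proof.
move=> xL nz_x; set c := 4%:R * (x i0 i1 + x i1 i0).
have c_neq0 : c != 0 by rewrite mulf_neq0 ?natrS_neq0.
suff: c *: pairmx 1 i0 i1 \in L by rewrite rpredZeq (negbTE c_neq0).
have yL := entries01_mem xL.
suff -> : c *: pairmx 1 i0 i1 =
    entries01 x + \matrix_(a, b) entries01 x (tperm i0 i1 a) (tperm i0 i1 b).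
  by apply: memvD => //; exact: perm_conj_mem.
apply/matrixP => a b; rewrite /c entries01E /pairmx !mxE !permE.
by ord4 a; ord4 b; rewrite /= ?mulr1n ?mulr0n; ring.
Qed.

Lemma sym01_mem_diag x : x \in L -> x i0 i0 != x i1 i1 -> pairmx 1 i0 i1 \in L.
Proof.
move=> xL neq_x; set c := 16%:R * (x i0 i0 - x i1 i1).
have c_neq0 : c != 0 by rewrite mulf_neq0 ?natrS_neq0 // subr_eq0.
suff: c *: pairmx 1 i0 i1 \in L by rewrite rpredZeq (negbTE c_neq0).
suff -> : c *: pairmx 1 i0 i1 = lieb (diag_extract x) (pairmx (-1) i0 i1).
  exact: L_ideal (diag_extract_mem xL) (pairmx_skew _ _ _).
apply/matrixP => a b; rewrite /c diag_extractE /lieb sub_mxE !mulmx4 /pairmx !mxE.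
by ord4 a; ord4 b; rewrite /= ?mulr1n ?mulr0n; ring.
Qed.

Lemma scalar_mem x : x \in L -> \tr x != 0 -> forall c, c%:M \in L.
Proof.
move=> xL tr_x c; rewrite -scalemx1; apply: memvZ.
have tr16_neq0 : 16%:R * \tr x != 0 by rewrite mulf_neq0 ?natrS_neq0.
suff: (16%:R * \tr x) *: 1%:M \in L by rewrite rpredZeq (negbTE tr16_neq0).
(* The Klein four-group acts transitively on the indices, so averaging over it
   spreads the diagonal of x evenly. *)
pose klein (y : M4) (s : {perm 'I_4}) := y + \matrix_(a, b) y (s a) (s b).
suff -> : (16%:R * \tr x) *: 1%:M =
    klein (klein (diag_extract x) (tperm i0 i1 * tperm i2 i3)%g) (tperm i0 i2 * tperm i1 i3)%g.
  have klein_mem y s : y \in L -> klein y s \in L.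
    by move=> yL; apply: memvD => //; exact: perm_conj_mem.
  by do 2! apply: (klein_mem); exact: diag_extract_mem.
apply/matrixP => a b; rewrite /klein diag_extractE mxtrace4 !mxE !permM !permE.
by ord4 a; ord4 b; rewrite /= ?mulr1n ?mulr0n; ring.
Qed.

Lemma skew_sub y : y \in L -> ~ symmxP y -> forall x, skewmxP x -> x \in L.
Proof.
move=> yL asym_y x; apply: (skew_span Fchar0 lin_closed_mem) => p q neq_pq.
have [i [j neq_y]] : exists i j, y i j != y j i.
  apply: NNPP => no_pair; apply: asym_y; apply/matrixP => a b; rewrite mxE.
  by apply/eqP; apply: contraT => neq_ba; case: no_pair; exists b, a.
have neq_ij : i != j by apply: contraNneq neq_y => ->.
have [y' y'L [y'01 y'10 _ _]] := mem_move01 neq_ij yL.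
apply: (pairmx_mem_move (i := i0) (j := i1)) => //.
by apply: (skew01_mem y'L); rewrite y'01 y'10.
Qed.

Lemma sym01_mem y : y \in L -> ~ scal_plus_skewP y -> pairmx 1 i0 i1 \in L.
Proof.
move=> yL nsk_y.
case: (classic (exists i j, i != j /\ y i j + y j i != 0)) => [[i [j [neq_ij nz_y]]] | off_y].
  have [y' y'L [y'01 y'10 _ _]] := mem_move01 neq_ij yL.
  by apply: (sym01_mem_offdiag y'L); rewrite y'01 y'10.
case: (classic (exists i j, y i i != y j j)) => [[i [j neq_y]] | diag_y].
  have neq_ij : i != j by apply: contraNneq neq_y => ->.
  have [y' y'L [_ _ y'00 y'11]] := mem_move01 neq_ij yL.
  by apply: (sym01_mem_diag y'L); rewrite y'00 y'11.
case: nsk_y; apply/(scal_plus_skew_entries Fchar0); split=> i j => [neq_ij|].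
  by apply/eqP; apply: contraT => nz_y; case: off_y; exists i, j.
by apply/eqP; apply: contraT => neq_y; case: diag_y; exists i, j.
Qed.

Lemma sym0_sub y : y \in L -> ~ scal_plus_skewP y ->
  forall x, symmxP x -> \tr x = 0 -> x \in L.
Proof.
move=> yL nsk_y.
have sym_mem p q : p != q -> pairmx 1 p q \in L.
  move=> neq_pq; apply: (pairmx_mem_move (i := i0) (j := i1)) => //.
  exact: sym01_mem yL nsk_y.
move=> x; apply: (sym_traceless_span lin_closed_mem sym_mem) => p.
have [-> | neq_p0] := eqVneq p i0; first by rewrite subrr mem0v.
rewrite -[_ - _](scalerK two_neq0) -lieb_pairmx //; apply: memvZ.
by apply: L_ideal (pairmx_skew _ _ _); apply: sym_mem; rewrite eq_sym.
Qed.

Lemma mem_components x : x \in L <->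
     ((exists2 y, y \in L & \tr y != 0) \/ \tr x = 0)
  /\ ((exists2 y, y \in L & ~ symmxP y) \/ symmxP x)
  /\ ((exists2 y, y \in L & ~ scal_plus_skewP y) \/ scal_plus_skewP x).
Proof.
split=> [xL | [Zx [Kx Sx]]].
  split; [|split]; [case: (eqVneq (\tr x) 0) | case: (classic (symmxP x)) |
                    case: (classic (scal_plus_skewP x))]; by [right | left; exists x].
rewrite (mx_decomp Fchar0 x); apply: memvD; first apply: memvD.
- case: Zx => [[y yL tr_y] | tr_x]; last by rewrite scalar_part_traceless ?mem0v.
  exact: scalar_mem yL tr_y _.
- case: Kx => [[y yL asym_y] | sym_x]; last by rewrite skew_part_sym ?mem0v.
  by apply: skew_sub yL asym_y _ _; exact: skew_part_skew.
- case: Sx => [[y yL nsk_y] | sk_x]; last by rewrite scal_plus_skew_sym0_part ?mem0v.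
  apply: sym0_sub yL nsk_y _ _ _; [exact: sym0_part_sym | exact: sym0_part_traceless].
Qed.

End SkewIdeal.

Theorem mainTheorem4 (F : fieldType) (Fchar0 : [pchar F] =i pred0)
  (L : {vspace 'M[F]_4}) :
  lie_skew_ideal L -> O4_conj_closed L ->
  vs_is L (fun x => x = 0) \/ vs_is L (@scalarmxP F) \/ vs_is L (@skewmxP F) \/
  vs_is L (comm_span (@symmxP F) (@skewmxP F)) \/ vs_is L (@symmxP F) \/
  vs_is L (@scal_plus_skewP F) \/ vs_is L (comm_span (@allmxP F) (@allmxP F)) \/
  vs_is L (@allmxP F).
Proof.
move=> L_ideal L_O4; have memL := mem_components Fchar0 L_ideal L_O4.
case: (classic (exists2 y, y \in L & \tr y != 0)) => hZ;
case: (classic (exists2 y, y \in L & ~ symmxP y)) => hK;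
case: (classic (exists2 y, y \in L & ~ scal_plus_skewP y)) => hS.
- by do 7! right; move=> x; have := memL x; rewrite /allmxP; tauto.
- by do 5! right; left; move=> x; have := memL x; tauto.
- by do 4! right; left; move=> x; have := memL x; tauto.
- by right; left; move=> x; have := memL x; have := scalarmx_iff Fchar0 x; tauto.
- by do 6! right; left; move=> x; have := memL x; have := comm_span_all_iff Fchar0 x; tauto.
- by do 2! right; left; move=> x; have := memL x; have := skewmx_iff Fchar0 x; tauto.
- by do 3! right; left; move=> x; have := memL x; have := sym_skew_comm_iff Fchar0 x; tauto.
- by left; move=> x; have := memL x; have := mx_eq0_iff Fchar0 x; tauto.
Qed.
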